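(* Let $\Delta$ be a compact Hausdorff space, $u\colon\Delta\to\mathbb R$ continuous, $v\colon\Delta\to\mathbb R$ upper semicontinuous, and define $$f(\alpha)=\max_{\bm w\in\Delta}\{v(\bm w):u(\bm w)=\alpha\},\qquad \tau(q)=\min_{\bm w\in\Delta}\{q\,u(\bm w)-v(\bm w)\}$$ (the maximum over the empty set being $-\infty$). Then $f(\alpha)\le\tau^*(\alpha)$ for all $\alpha\in\mathbb R$, and if $\tau$ is supported at $(q,\alpha)$ for some $q\in\mathbb R$ then $f(\alpha)=q\alpha-\tau(q)=\tau^*(\alpha)$. Moreover the following are equivalent: (i) for all $q\in\mathbb R$ and all $\alpha\in\partial\tau(q)$, $\tau$ is supported at $(q,\alpha)$; (ii) $f(\alpha)=\tau^*(\alpha)$ for all $\alpha\in\mathbb R$; (iii) $f$ is a concave function.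
   Context: For $g\colon\mathbb R\to\mathbb R\cup\{-\infty\}$, the concave conjugate is $g^*(\alpha)=\inf_{q\in\mathbb R}(q\alpha-g(q))$. For concave $g$, $\partial g(q)=\{\alpha:\alpha(y-q)+g(q)\ge g(y)\ \forall y\in\mathbb R\}=[\partial^+g(q),\partial^-g(q)]$, where $\partial^\pm g(q)$ are the right/left derivatives. $\tau$ is supported at $(q,\alpha)$ if there is $\bm w\in\Delta$ with $\tau(q)=q\,u(\bm w)-v(\bm w)$ and $u(\bm w)=\alpha$. *)

From mathcomp Require Import all_boot all_order all_algebra.
From mathcomp Require Import all_classical all_reals all_analysis.
Set Implicit Arguments. Unset Strict Implicit. Unset Printing Implicit Defensive.
Import Order.TTheory GRing.Theory Num.Theory.
Local Open Scope classical_set_scope.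
Local Open Scope ring_scope.

Definition upper_semicontinuous {X : topologicalType} {R : realType} (v : X -> R) :=
  forall x (a : R), v x < a -> exists2 V, nbhs x V & forall y, V y -> v y < a.

Local Open Scope ereal_scope.

Definition fmax {D : Type} {R : realType} (u v : D -> R) (alpha : R) : \bar R :=
  ereal_sup [set (v w)%:E | w in [set w | u w = alpha]].

Definition tau {D : Type} {R : realType} (u v : D -> R) (q : R) : \bar R :=
  ereal_inf [set (q * u w - v w)%:E | w in [set: D]].

Definition conj_concave {R : realType} (g : R -> \bar R) (alpha : R) : \bar R :=
  ereal_inf [set (q * alpha)%:E - g q | q in [set: R]].

Definition superdiff {R : realType} (g : R -> \bar R) (q : R) : set R :=
  [set alpha | forall y : R, g y <= (alpha * (y - q))%:E + g q].

Definition supported_at {D : Type} {R : realType} (u v : D -> R) (q alpha : R) : Prop :=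
  exists w : D, tau u v q = (q * u w - v w)%:E /\ u w = alpha.

Definition concave_ext {R : realType} (f : R -> \bar R) : Prop :=
  forall (x y t : R), (0 < t < 1)%R ->
    t%:E * f x + (1 - t)%R%:E * f y <= f (t * x + (1 - t) * y)%R.

From mathcomp Require Import all_boot all_order all_algebra.
From mathcomp Require Import all_classical all_reals all_analysis.
From mathcomp Require Import ring lra.
Import Order.TTheory GRing.Theory Num.Theory numFieldNormedType.Exports.
Local Open Scope classical_set_scope.
Local Open Scope ring_scope.

(* Compactness and semicontinuity make [tau] finite, concave and Lipschitz, and make
   approximate maximisers exact: a cluster point of points [w] with [u w] close to
   [alpha] and [v w] almost [c] lies in the fibre [u = alpha] and has [v >= c].  Hence
   [f alpha >= q alpha - tau q] as soon as minimisers of [q u - v] can be found, up to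
   small errors, over [alpha].
   If [alpha] is a supergradient of [tau] at [q], one-sided difference quotients of
   [tau] give minimisers [p], [p'] of [q u - v] with [u p <= alpha <= u p']; concavity
   of [f] carries the bound [f >= q . - tau q] from [u p] and [u p'] to [alpha].
   If [q |-> q alpha - tau q] has no minimiser, its infimum [tau^* alpha] is nearly
   attained at two points far apart; an affine function [q |-> v w + q (alpha - u w)]
   lying below it there but nearly reaching it in between has slope nearly [0], so
   [u w] is close to [alpha] and [v w] close to [tau^* alpha]. *)

Section upper_semicontinuity.
Context {R : realType} {D : topologicalType}.
Implicit Types (f g : D -> R).

Lemma continuous_usc {f} : continuous (f : D -> R^o) -> upper_semicontinuous f.
Proof.
move=> cf x a fxa; exists (f @^-1` [set r | r < a]) => //.
by apply: cf; apply: open_nbhs_nbhs; split => //; exact: open_lt.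
Qed.

Lemma usc_add {f g} : upper_semicontinuous f -> upper_semicontinuous g ->
  upper_semicontinuous (fun x => f x + g x).
Proof.
move=> sf sg x a fgxa; set d := (a - (f x + g x)) / 2.
have d0 : 0 < d by rewrite divr_gt0 // subr_gt0.
have [V xV Vf] := sf x (f x + d) ltac:(by rewrite ltrDl).
have [W xW Wg] := sg x (g x + d) ltac:(by rewrite ltrDl).
exists (V `&` W); first exact: filterI.
move=> y [/Vf fy /Wg gy]; rewrite /d in fy gy; lra.
Qed.

Lemma usc_limit_ge {f} {w : nat -> D} {p} c : upper_semicontinuous f ->
  cluster (w @ \oo) p ->
  (forall e, 0 < e -> \forall n \near \oo, c - e <= f (w n)) -> c <= f p.
Proof.
move=> sf clp wc; rewrite leNgt; apply/negP => fpc.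
have [V pV Vf] := sf p ((f p + c) / 2) ltac:(lra).
have [x [/= xge /Vf]] :=
  clp [set x | c - (c - f p) / 2 <= f x] V (wc ((c - f p) / 2) ltac:(lra)) pV.
lra.
Qed.

Hypothesis cD : compact [set: D].

Lemma compact_seq_cluster (w : nat -> D) : exists p, cluster (w @ \oo) p.
Proof. by have [p [_ clp]] := cD _ _ (filterT : (w @ \oo) setT); exists p. Qed.

Lemma compact_usc_approx {f g} a b :
  upper_semicontinuous f -> upper_semicontinuous g ->
  (forall e, 0 < e -> exists x, a - e <= f x /\ b - e <= g x) ->
  exists p, a <= f p /\ b <= g p.
Proof.
move=> sf sg approx.
have [w wP] := choice (fun n => approx n.+1%:R^-1 ltac:(by rewrite invr_gt0)).
have [p clp] := compact_seq_cluster w.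
have near_inv (e : R) : 0 < e -> \forall n \near \oo, n.+1%:R^-1 <= e.
  by move=> e0; have := near_infty_natSinv_lt (PosNum e0); apply: filterS => n /ltW.
have cluster_ge (h : D -> R) c : upper_semicontinuous h ->
    (forall n, c - n.+1%:R^-1 <= h (w n)) -> c <= h p.
  move=> sh hw; apply: (usc_limit_ge _ sh clp) => e e0.
  apply: filterS (near_inv e e0) => n; have := hw n.
  by set r := _^-1; lra.
by exists p; split; [apply: cluster_ge sf _ | apply: cluster_ge sg _] => n; case: (wP n).
Qed.

Lemma usc_compact_bounded {f} : upper_semicontinuous f -> exists M, forall x, f x <= M.
Proof.
move=> sf; apply: contrapT => unbounded.
have above n : exists x, n%:R < f x.
  apply: contrapT => none; apply: unbounded; exists n%:R => x.
  by rewrite leNgt; apply/negP => ?; apply: none; exists x.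
have [w wP] := choice above.
have [p clp] := compact_seq_cluster w.
suff : f p + 1 <= f p by lra.
apply: (usc_limit_ge _ sf clp) => e e0.
apply: filterS (nbhs_infty_gtr (f p + 1)) => n pn.
by have := wP n; lra.
Qed.

End upper_semicontinuity.

Section concave_conjugate.
Context {R : realType}.
Variable g : R -> R.
Local Notation gE := (fun q => (g q)%:E).

Lemma conj_concave_le alpha q : (conj_concave gE alpha <= (q * alpha - g q)%:E)%E.
Proof. by apply: ereal_inf_lbound; exists q. Qed.

Lemma conj_concave_ge alpha x :
  (forall q, (x <= (q * alpha - g q)%:E)%E) -> (x <= conj_concave gE alpha)%E.
Proof. by move=> xle; apply: le_ereal_inf_tmp => _ [q _ <-]; rewrite -EFinB. Qed.

Lemma conj_concave_lt alpha x :
  (conj_concave gE alpha < x)%E -> exists q, ((q * alpha - g q)%:E < x)%E.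
Proof. by case/ereal_inf_lt => _ [q _ <-]; rewrite -EFinB; exists q. Qed.

Lemma superdiffE q alpha :
  superdiff gE q alpha <-> forall y, q * alpha - g q <= y * alpha - g y.
Proof. by split=> sd y; have := sd y; rewrite -EFinD lee_fin; lra. Qed.

Lemma conj_concave_concave : concave_ext (conj_concave gE).
Proof.
move=> x y t /andP [t0 t1]; apply: conj_concave_ge => q.
apply: (@le_trans _ _ (t%:E * (q * x - g q)%:E + (1 - t)%:E * (q * y - g q)%:E)%E).
  by apply: leeD; apply: lee_wpmul2l; rewrite ?lee_fin ?subr_ge0 ?(ltW t0) ?(ltW t1) //;
    exact: conj_concave_le.
by rewrite -!EFinM -EFinD lee_fin; nra.
Qed.

End concave_conjugate.

Lemma concave_ext_affine_ge {R : realType} {f : R -> \bar R} {m k a b x : R} :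
  concave_ext f -> a <= x <= b ->
  ((m * a + k)%:E <= f a)%E -> ((m * b + k)%:E <= f b)%E -> ((m * x + k)%:E <= f x)%E.
Proof.
move=> cf /andP [ax xb] fa fb.
have [<-|neax] := eqVneq a x => //; have [->|nexb] := eqVneq x b => //.
have ltax : a < x by rewrite lt_neqAle neax.
have ltxb : x < b by rewrite lt_neqAle nexb.
set t := (b - x) / (b - a).
have t01 : 0 < t < 1 by rewrite divr_gt0 ?subr_gt0 ?ltr_pdivrMr ?subr_gt0 //; lra.
have -> : x = t * a + (1 - t) * b by rewrite /t; field; lra.
apply: le_trans (cf _ _ _ t01).
apply: (@le_trans _ _ (t%:E * (m * a + k)%:E + (1 - t)%:E * (m * b + k)%:E)%E).
  by rewrite -!EFinM -EFinD lee_fin; nra.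
by move/andP: t01 => [t0 t1]; apply: leeD; apply: lee_wpmul2l;
  rewrite ?lee_fin ?subr_ge0 ?(ltW t0) ?(ltW t1).
Qed.

Lemma continuous_no_min_far {R : realType} {f : R -> R} : continuous f ->
  (forall x, exists y, f y < f x) ->
  forall x L, 0 <= L -> exists y, L < `|y - x| /\ f y < f x.
Proof.
move=> cf nomin x L L0.
have xLx : x - L <= x + L by lra.
have [m _ mmin] := EVT_min xLx (continuous_subspaceT cf).
have [y fy] := nomin m.
have xin : x \in `[x - L, x + L] by rewrite in_itv /=; apply/andP; split; lra.
exists y; split; last exact: lt_le_trans fy (mmin _ xin).
rewrite ltNge; apply/negP => yx; move: fy; apply/negP; rewrite -leNgt.
by apply: mmin; rewrite in_itv /= -ler_distl.
Qed.

Lemma three_point_bound {R : realType} (V s a c C eta : R) : 0 < eta ->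
  `|a| + 1 <= c - a -> V + a * s <= C + eta -> V + c * s <= C + eta ->
  C - eta <= V + (a + (`|a| + 1) / 2) * s -> `|s| <= 4 * eta /\ C - 7 * eta <= V.
Proof.
move=> eta0 ca Va Vc Vb; set L := `|a| + 1 in ca Vb.
have aL : `|a| <= L by rewrite /L lerDl.
have L1 : 1 <= L by rewrite /L lerDr.
have slope_left : - (4 * eta) <= s * L.
  have -> : s * L = 2 * ((a + L / 2) * s - a * s) by field.
  lra.
have slope_right : s * L <= 4 * eta.
  have [s0|s0] := leP 0 s; last by nra.
  have : s * (c - (a + L / 2)) <= 2 * eta.
    have -> : s * (c - (a + L / 2)) = c * s - (a + L / 2) * s by ring.
    lra.
  have : 0 <= s * (c - (a + L / 2) - L / 2) by apply: mulr_ge0; lra.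
  nra.
have sL : `|s| * L <= 4 * eta.
  by have [s0|s0] := leP 0 s; [rewrite ger0_norm | rewrite ltr0_norm //]; lra.
have s_small : `|s| <= 4 * eta by apply: le_trans sL; rewrite ler_peMr.
split => //.
have bs : (a + L / 2) * s <= 6 * eta.
  apply: le_trans (ler_norm _) _; rewrite normrM.
  have : `|a + L / 2| <= 3 / 2 * L.
    apply: le_trans (ler_normD _ _) _; rewrite (@ger0_norm _ (L / 2)); lra.
  move=> bL; apply: le_trans (ler_wpM2r (normr_ge0 s) bL) _.
  have -> : 3 / 2 * L * `|s| = 3 / 2 * (`|s| * L) by ring.
  lra.
lra.
Qed.

Section fmax.
Context {D : Type} {R : realType} (u v : D -> R).

Lemma fmax_ub {alpha w} : u w = alpha -> ((v w)%:E <= fmax u v alpha)%E.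
Proof. by move=> uw; apply: ereal_sup_ubound; exists w. Qed.

Lemma fmax_lub alpha x :
  (forall w, u w = alpha -> ((v w)%:E <= x)%E) -> (fmax u v alpha <= x)%E.
Proof. by move=> ub; apply: ge_ereal_sup => _ [w /= uw <-]; apply: ub. Qed.

Lemma fmax_gt alpha x :
  (x < fmax u v alpha)%E -> exists w, u w = alpha /\ (x < (v w)%:E)%E.
Proof. by case/ereal_sup_gt => _ [w /= uw <-] xv; exists w. Qed.

End fmax.

Definition taur {D : Type} {R : realType} (u v : D -> R) (q : R) : R :=
  fine (tau u v q).

Section tau_bounded.
Context {D : Type} {R : realType} {u v : D -> R} (w0 : D) {B : R}.
Hypothesis uvB : forall w, `|u w| <= B /\ v w <= B.

Lemma tau_le q w : (tau u v q <= (q * u w - v w)%:E)%E.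
Proof. by apply: ereal_inf_lbound; exists w. Qed.

Lemma tauE q : tau u v q = (taur u v q)%:E.
Proof.
rewrite /taur fineK // fin_numElt; apply/andP; split.
  apply: (@lt_le_trans _ _ (- `|q| * B - B)%:E); first by rewrite ltNyr.
  apply: le_ereal_inf_tmp => _ [w _ <-]; rewrite lee_fin.
  have [uwB vwB] := uvB w.
  suff : - `|q| * B <= q * u w by lra.
  rewrite mulNr lerNl -mulrN; apply: le_trans (ler_norm _) _.
  by rewrite normrM normrN ler_wpM2l.
by apply: le_lt_trans (tau_le q w0) _; rewrite ltry.
Qed.

Lemma taur_le q w : taur u v q <= q * u w - v w.
Proof. by rewrite -lee_fin -tauE; exact: tau_le. Qed.

Lemma taur_glb q x : (forall w, x <= q * u w - v w) -> x <= taur u v q.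
Proof.
move=> lb; rewrite -lee_fin -tauE; apply: le_ereal_inf_tmp => _ [w _ <-].
by rewrite lee_fin.
Qed.

Lemma taur_approx q e : 0 < e -> exists w, q * u w - v w < taur u v q + e.
Proof.
move=> e0; have : (tau u v q < (taur u v q + e)%:E)%E by rewrite tauE lte_fin ltrDl.
by case/ereal_inf_lt => _ [w _ <-]; rewrite lte_fin; exists w.
Qed.

Lemma taur_lipschitz q q' : taur u v q <= taur u v q' + `|q - q'| * B.
Proof.
rewrite -lerBlDr; apply: taur_glb => w; rewrite lerBlDr.
apply: le_trans (taur_le q w) _.
have -> : q * u w - v w = q' * u w - v w + (q - q') * u w by ring.
rewrite lerD2l; apply: le_trans (ler_norm _) _.
by rewrite normrM ler_wpM2l //; case: (uvB w).
Qed.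

Lemma taur_continuous : continuous (taur u v : R -> R).
Proof.
have B0 : 0 <= B by apply: le_trans (normr_ge0 _) (uvB w0).1.
move=> x; apply/cvgrPdist_lt => e e0.
have d0 : 0 < e / (B + 1) by rewrite divr_gt0 // ltr_wpDl.
apply: filterS ((cvgrPdist_lt _ _).1 (@cvg_id _ (nbhs x)) _ d0) => y.
rewrite ltr_pdivlMr ?ltr_wpDl // => xy.
have := taur_lipschitz x y; have := taur_lipschitz y x; rewrite (distrC y).
have := normr_ge0 (x - y); rewrite mulrDr mulr1 in xy.
set d := `|x - y| in xy * => d0' l1 l2.
rewrite ltr_norml; apply/andP; split; lra.
Qed.

Lemma tau_taur : tau u v = fun q => (taur u v q)%:E.
Proof. by apply: funext => q; rewrite tauE. Qed.

Lemma fmax_le_conj alpha : (fmax u v alpha <= conj_concave (tau u v) alpha)%E.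
Proof.
apply: fmax_lub => w <-; rewrite tau_taur; apply: conj_concave_ge => q.
by rewrite lee_fin; have := taur_le q w; lra.
Qed.

Lemma supported_fmax_conj q alpha : supported_at u v q alpha ->
  (fmax u v alpha = (q * alpha)%:E - tau u v q /\
   (q * alpha)%:E - tau u v q = conj_concave (tau u v) alpha)%E.
Proof.
case=> w [tw uw].
have vwE : ((q * alpha)%:E - tau u v q)%E = (v w)%:E.
  by rewrite tw -EFinB -uw; congr _%:E; ring.
have conj_le : (conj_concave (tau u v) alpha <= (v w)%:E)%E.
  by rewrite -vwE tau_taur -EFinB; exact: conj_concave_le.
have := fmax_ub u v uw; have := fmax_le_conj alpha; rewrite vwE => le1 le2.
have fmaxE : fmax u v alpha = (v w)%:E.
  by apply/le_anti; rewrite le2 andbT; exact: le_trans le1 conj_le.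
by rewrite fmaxE; split => //; apply/le_anti; rewrite conj_le andbT -fmaxE.
Qed.

(* A near-minimiser [w] of [q' u - v] at [q' = q + s h] is also a near-minimiser at
   [q]; comparing the two through the supergradient inequality at [q'] bounds
   [s (u w - alpha)]. *)
Lemma superdiff_approx_argmin {q alpha s e} : `|s| <= 1 ->
  (forall y, q * alpha - taur u v q <= y * alpha - taur u v y) -> 0 < e ->
  exists w, q * u w - v w < taur u v q + e /\ s * (u w - alpha) < e.
Proof.
move=> s1 qmin e0.
have B0 : 0 <= B by apply: le_trans (normr_ge0 _) (uvB w0).1.
set K := `|alpha| + B; set h := e / (K + e).
have K0 : 0 <= K by rewrite addr_ge0.
have h0 : 0 < h by rewrite divr_gt0 //; lra.
have hK : h * K + h * e = e by rewrite /h -mulrDr divfK //; lra.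
have [w near] := taur_approx (q + s * h) (h * e) (mulr_gt0 h0 e0).
have := qmin (q + s * h); have := taur_le q w.
set S := s * (alpha - u w) => tq tmin.
have hS : (q + s * h) * u w - (q + s * h) * alpha = q * u w - q * alpha - h * S.
  by rewrite /S; ring.
have SK : h * S <= h * K.
  rewrite ler_pM2l //; apply: le_trans (ler_norm _) _; rewrite normrM.
  apply: le_trans (ler_wpM2r (normr_ge0 _) s1) _; rewrite mul1r.
  apply: le_trans (ler_normB _ _) _; rewrite lerD2l; exact: (uvB w).1.
have Se : - e < S by rewrite -(ltr_pM2l h0) mulrN; lra.
by exists w; split; [lra | rewrite /S in Se; lra].
Qed.

Lemma conj_no_min_approx alpha c e :
  (forall q, exists y, y * alpha - taur u v y < q * alpha - taur u v q) ->
  conj_concave (tau u v) alpha = c%:E -> 0 < e ->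
  exists w, `|u w - alpha| <= e /\ c - e <= v w.
Proof.
rewrite tau_taur => nomin conjE e0; set eta := e / 7.
have eta0 : 0 < eta by rewrite divr_gt0.
set g := fun q => q * alpha - taur u v q.
have gc : continuous g.
  by move=> x; apply: cvgB; [exact: cvgMr_tmp | exact: taur_continuous].
have c_le q : c <= g q by rewrite -lee_fin -conjE; exact: conj_concave_le.
have [q1] : exists q1, g q1 < c + eta.
  have /conj_concave_lt[q] :
      (conj_concave (fun q => (taur u v q)%:E) alpha < (c + eta)%:E)%E.
    by rewrite conjE lte_fin ltrDl.
  by rewrite lte_fin; exists q.
set L := `|q1| + 1 => gq1.
have [y [yfar gy]] := continuous_no_min_far gc nomin q1 L (addr_ge0 (normr_ge0 _) ler01).
have g_ge q w : v w + q * (alpha - u w) <= g q.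
  by have := taur_le q w; rewrite /g; lra.
have near_max q : exists w, c - eta <= v w + q * (alpha - u w).
  have [w wq] := taur_approx q eta eta0; exists w.
  by have := c_le q; rewrite /g; lra.
suff [w [sw vw]] : exists w, `|alpha - u w| <= 4 * eta /\ c - 7 * eta <= v w.
  by exists w; rewrite distrC; rewrite /eta in sw vw; split; lra.
have L_def : L = `|q1| + 1 by [].
have [y_gt|y_lt] := ltP q1 y.
- have [w wmax] := near_max (q1 + L / 2); exists w.
  apply: (three_point_bound _ _ q1 y) => //.
  + by move: yfar; rewrite gtr0_norm ?subr_gt0; lra.
  + by apply: le_trans (g_ge _ _) _; lra.
  + by apply: le_trans (g_ge _ _) _; lra.
- have [w wmax] := near_max (q1 - L / 2); exists w; rewrite -normrN.
  apply: (three_point_bound _ _ (- q1) (- y)) => //.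
  + by move: yfar; rewrite normrN ler0_norm ?subr_le0; lra.
  + by rewrite mulrNN; apply: le_trans (g_ge _ _) _; lra.
  + by rewrite mulrNN; apply: le_trans (g_ge _ _) _; lra.
  + rewrite normrN; suff -> : (- q1 + (`|q1| + 1) / 2) * - (alpha - u w) =
      (q1 - L / 2) * (alpha - u w) by [].
    by rewrite L_def; ring.
Qed.

End tau_bounded.

Section compact_domain.
Context {D : topologicalType} {R : realType} {u v : D -> R}.
Hypotheses (cD : compact [set: D]) (cu : continuous (u : D -> R^o))
  (sv : upper_semicontinuous v).

Lemma uv_bounded : exists B, forall w, `|u w| <= B /\ v w <= B.
Proof.
have [Mv vM] := usc_compact_bounded cD sv.
have [Mu uM] := usc_compact_bounded cD (continuous_usc cu).
have [Mu' uM'] := usc_compact_bounded cD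
  (continuous_usc (f := fun x => - u x) (fun x => cvgN (cu x))).
exists (`|Mv| + `|Mu| + `|Mu'|) => w.
have := vM w; have := uM w; have := uM' w => h1 h2 h3.
have := ler_norm Mv; have := ler_norm Mu; have := ler_norm Mu'.
have := normr_ge0 Mv; have := normr_ge0 Mu; have := normr_ge0 Mu'.
by rewrite ler_norml; split; [apply/andP; split|]; lra.
Qed.

Lemma exists_fiber_ge alpha c :
  (forall e, 0 < e -> exists w, `|u w - alpha| <= e /\ c - e <= v w) ->
  exists p, u p = alpha /\ c <= v p.
Proof.
move=> approx.
have dist_usc : upper_semicontinuous (fun w => - `|u w - alpha|).
  apply: continuous_usc => x; apply: cvgN; apply: cvg_norm.
  by apply: cvgB; [exact: cu | exact: cvg_cst].
have [|p [dist0 vp]] := compact_usc_approx cD 0 c dist_usc sv.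
  move=> e /approx [w [uw vw]]; exists w; split => //; lra.
by exists p; split => //; apply/eqP; rewrite -subr_eq0 -normr_le0; lra.
Qed.

Context (w0 : D) {B : R}.
Hypothesis uvB : forall w, `|u w| <= B /\ v w <= B.

Lemma supported_of_fmax_ge q alpha :
  ((q * alpha - taur u v q)%:E <= fmax u v alpha)%E -> supported_at u v q alpha.
Proof.
move=> fmax_ge.
have [|p [up vp]] := exists_fiber_ge alpha (q * alpha - taur u v q).
  move=> e e0; have /fmax_gt [w [uw vw]] :
      ((q * alpha - taur u v q - e)%:E < fmax u v alpha)%E.
    by apply: lt_le_trans fmax_ge; rewrite lte_fin; lra.
  by exists w; rewrite uw subrr normr0 (ltW e0); move: vw; rewrite lte_fin => /ltW.
exists p; split => //; rewrite (tauE w0 uvB); congr _%:E; apply/le_anti.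
by rewrite (taur_le w0 uvB) /= up; lra.
Qed.

Lemma superdiff_argmin q alpha s : `|s| <= 1 -> superdiff (tau u v) q alpha ->
  exists p, q * u p - v p <= taur u v q /\ s * (u p - alpha) <= 0.
Proof.
rewrite (tau_taur w0 uvB) superdiffE => s1 qmin.
have usc_gap : upper_semicontinuous (fun w => v w + - q * u w).
  by apply: usc_add => //; apply: continuous_usc => x; apply: cvgMl_tmp; exact: cu.
have usc_side : upper_semicontinuous (fun w => s * alpha + - s * u w).
  apply: continuous_usc => x; apply: cvgD; first exact: cvg_cst.
  by apply: cvgMl_tmp; exact: cu.
have [|p [gap side]] := compact_usc_approx cD (- taur u v q) 0 usc_gap usc_side.
  move=> e /(superdiff_approx_argmin w0 uvB s1 qmin) [w [gap side]].
  by exists w; split; lra.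
by exists p; split; lra.
Qed.


Lemma supported_conj_eq :
  (forall q alpha, superdiff (tau u v) q alpha -> supported_at u v q alpha) ->
  forall alpha, fmax u v alpha = conj_concave (tau u v) alpha.
Proof.
move=> supp alpha; apply/le_anti; rewrite (fmax_le_conj w0 uvB) /=.
have [[q qmin]|nomin] :=
  pselect (exists q, forall y, q * alpha - taur u v q <= y * alpha - taur u v y).
  have /supp/(supported_fmax_conj w0 uvB) [-> ->] // : superdiff (tau u v) q alpha.
  by rewrite (tau_taur w0 uvB) superdiffE.
have {}nomin q : exists y, y * alpha - taur u v y < q * alpha - taur u v q.
  apply: contrapT => qmin; apply: nomin; exists q => y.
  by rewrite leNgt; apply/negP => ylt; apply: qmin; exists y.
case conjE : (conj_concave (tau u v) alpha) => [c| |].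
- have [p [up vp]] := exists_fiber_ge alpha c
    (fun e e0 => conj_no_min_approx w0 uvB alpha c e nomin conjE e0).
  by apply: le_trans (fmax_ub u v up); rewrite lee_fin.
- by move: conjE; rewrite (tau_taur w0 uvB) => conjE;
    have := conj_concave_le (taur u v) alpha 0; rewrite conjE.
- exact: leNye.
Qed.

Lemma conj_eq_supported :
  (forall alpha, fmax u v alpha = conj_concave (tau u v) alpha) ->
  forall q alpha, superdiff (tau u v) q alpha -> supported_at u v q alpha.
Proof.
move=> fmaxE q alpha; rewrite (tau_taur w0 uvB) superdiffE => qmin.
apply: supported_of_fmax_ge; rewrite fmaxE (tau_taur w0 uvB).
by apply: conj_concave_ge => y; rewrite lee_fin.
Qed.

Lemma concave_supported : concave_ext (fmax u v) ->
  forall q alpha, superdiff (tau u v) q alpha -> supported_at u v q alpha.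
Proof.
move=> fconc q alpha sd.
have [pl [pl_min pl_le]] := superdiff_argmin q alpha 1 ltac:(by rewrite normr1) sd.
have [pr [pr_min pr_ge]] :=
  superdiff_argmin q alpha (-1) ltac:(by rewrite normrN normr1) sd.
have argmin_fmax p : q * u p - v p <= taur u v q ->
    ((q * u p + - taur u v q)%:E <= fmax u v (u p))%E.
  by move=> pmin; apply: le_trans (fmax_ub u v erefl); rewrite lee_fin; lra.
apply: supported_of_fmax_ge.
apply: (concave_ext_affine_ge fconc _ (argmin_fmax _ pl_min) (argmin_fmax _ pr_min)).
by apply/andP; split; lra.
Qed.

End compact_domain.

Local Open Scope ereal_scope.

Theorem propositionp (R : realType) (D : topologicalType)
  (hD : hausdorff_space D) (cD : compact [set: D]) (w0 : D)
  (u v : D -> R) (cu : continuous (u : D -> R^o)) (sv : upper_semicontinuous v) :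
  (forall alpha : R, fmax u v alpha <= conj_concave (tau u v) alpha) /\
  (forall q alpha : R, supported_at u v q alpha ->
     fmax u v alpha = (q * alpha)%:E - tau u v q /\
     (q * alpha)%:E - tau u v q = conj_concave (tau u v) alpha) /\
  ((forall q alpha : R, superdiff (tau u v) q alpha -> supported_at u v q alpha)
     <-> (forall alpha : R, fmax u v alpha = conj_concave (tau u v) alpha)) /\
  ((forall alpha : R, fmax u v alpha = conj_concave (tau u v) alpha)
     <-> concave_ext (fmax u v)).
Proof.
have [B uvB] := uv_bounded cD cu sv.
have i_ii := supported_conj_eq cD cu sv w0 uvB.
have ii_i := conj_eq_supported cD cu sv w0 uvB.
have iii_i := concave_supported cD cu sv w0 uvB.
split; first by move=> alpha; exact: (fmax_le_conj w0 uvB alpha).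
split; first by move=> q alpha; exact: (supported_fmax_conj w0 uvB q alpha).
split; first by split => [supp alpha | fmaxE q alpha]; [exact: i_ii | exact: ii_i].
split => [fmaxE | fconc alpha]; last exact: i_ii (iii_i fconc) alpha.
rewrite (funext fmaxE) (tau_taur w0 uvB); exact: conj_concave_concave.
Qed.
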